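(* Let $\Xi^\natural=\frac12\big(\sum_{i\in[p]}S^\natural_{ii}-\sum_{i\in p+[q]}S^\natural_{ii}\big)\in S^2(\mathfrak o_n)$ and $\Xi=\Phi^{-1}(\Xi^\natural)\in S^2(\mathfrak g)$. Then $$\gamma_2(\Xi)=\Omega_{\mathfrak o_p}-\Omega_{\mathfrak o_q}-\frac{p-q}{p+q}\Omega_{\mathfrak g}.$$
   Context: Let $n=p+q$, $I_{p,q}=\mathrm{diag}(1_p,-1_q)$, $\mathfrak g=\{X\in\mathfrak{gl}_n(\mathbb C):{}^tXI_{p,q}+I_{p,q}X=0\}$, $\mathfrak o_n=\{X\in\mathfrak{gl}_n(\mathbb C):{}^tX+X=0\}$. Write $[p]=\{1,\dots,p\}$, $p+[q]=\{p+1,\dots,n\}$, $\epsilon_i=1$ for $i\in[p]$ and $-1$ otherwise. Put $X_{i,j}=\epsilon_jE_{i,j}-\epsilon_iE_{j,i}\in\mathfrak g$ and $M_{i,j}=E_{i,j}-E_{j,i}\in\mathfrak o_n$. Set $X_{i,j}^\vee=-X_{i,j}$ if $i,j\in[p]$ or $i,j\in p+[q]$, and $X_{i,j}^\vee=X_{i,j}$ otherwise. $\Phi:\mathfrak g\to\mathfrak o_n$, $X\mapsto I_{p,q}^{1/2}XI_{p,q}^{-1/2}$ with $I_{p,q}^{1/2}=\mathrm{diag}(1,\dots,1,\sqrt{-1},\dots,\sqrt{-1})$, extended to tensors. $S^2$ is identified with symmetric 2-tensors; $\gamma_2:S^2(\mathfrak g)\to U(\mathfrak g)$ is the restriction of $a\otimes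 b\mapsto ab$. Define $Q^\natural=\sum_{i,k\in[n]}M_{i,k}\otimes M_{k,i}$ and $S^\natural_{ij}=\frac12\sum_{k\in[n]}(M_{i,k}\otimes M_{k,j}+M_{k,j}\otimes M_{i,k})-\frac1n\delta_{i,j}Q^\natural$. Casimir elements: $\Omega_{\mathfrak g}=\sum_{i<j}X_{i,j}X_{i,j}^\vee$, $\Omega_{\mathfrak o_p}=\sum_{i<j,\ i,j\in[p]}X_{i,j}X_{j,i}$, $\Omega_{\mathfrak o_q}=\sum_{i<j,\ i,j\in p+[q]}X_{i,j}X_{j,i}$. *)

From HB Require Import structures.
From mathcomp Require Import all_boot all_order all_algebra all_field.
Set Implicit Arguments. Unset Strict Implicit. Unset Printing Implicit Defensive.
Import Order.TTheory GRing.Theory Num.Theory.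
Local Open Scope ring_scope.

(* Ground field: algC (algebraically closed, char 0, contains sqrt(-1) = 'i). *)
Notation C := algC.

Section Defs.
Variables p q : nat.
Local Notation n := (p + q)%N.
Local Notation idx := 'I_n.

Definition eps (i : idx) : C := if (i < p)%N then 1 else -1.

Definition Ipq : 'M[C]_n := diag_mx (\row_i eps i).
Definition Ihalf : 'M[C]_n := diag_mx (\row_i (if (i < p)%N then 1 else 'i)).

Definition in_g (X : 'M[C]_n) : bool := X^T *m Ipq + Ipq *m X == 0.

Definition Phi (X : 'M[C]_n) : 'M[C]_n := Ihalf *m X *m invmx Ihalf.
Definition Phiinv (Y : 'M[C]_n) : 'M[C]_n := invmx Ihalf *m Y *m Ihalf.

Definition Xm (i j : idx) : 'M[C]_n :=
  eps j *: delta_mx i j - eps i *: delta_mx j i.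
Definition Mm (i j : idx) : 'M[C]_n := delta_mx i j - delta_mx j i.
Definition Xvee (i j : idx) : 'M[C]_n :=
  if ((i < p) == (j < p))%N then - Xm i j else Xm i j.

(* Formal 2-tensors: finite formal sums  sum_t c_t * (a_t (x) b_t). *)
Definition tens := seq (C * 'M[C]_n * 'M[C]_n).
Definition tscale (c : C) (t : tens) : tens :=
  [seq (c * x.1.1, x.1.2, x.2) | x <- t].
Definition tsum (f : idx -> tens) : tens := flatten [seq f i | i <- enum idx].
Definition tPhiinv (t : tens) : tens :=
  [seq (x.1.1, Phiinv x.1.2, Phiinv x.2) | x <- t].

Definition Qnat : tens :=
  tsum (fun i => tsum (fun k => [:: (1, Mm i k, Mm k i)])).
Definition Snat (i j : idx) : tens :=
  tscale (1/2) (tsum (fun k => [:: (1, Mm i k, Mm k j); (1, Mm k j, Mm i k)]))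
  ++ tscale (- ((i == j)%:R / n%:R)) Qnat.
Definition Xinat : tens :=
  tscale (1/2) (tsum (fun i => if (i < p)%N then Snat i i else [::])
                ++ tscale (-1) (tsum (fun i => if (i < p)%N then [::] else Snat i i))).
Definition Xi : tens := tPhiinv Xinat.

(* gamma_2 composed with a Lie algebra map rho : g -> A:
   a (x) b  |->  rho a * rho b, extended linearly. *)
Definition gamma2 (A : algType C) (rho : 'M[C]_n -> A) (t : tens) : A :=
  \sum_(x <- t) x.1.1 *: (rho x.1.2 * rho x.2).

Definition Omega_g (A : algType C) (rho : 'M[C]_n -> A) : A :=
  \sum_(i : idx) \sum_(j : idx | (i < j)%N) rho (Xm i j) * rho (Xvee i j).
Definition Omega_op (A : algType C) (rho : 'M[C]_n -> A) : A :=
  \sum_(i : idx | (i < p)%N) \sum_(j : idx | (i < j)%N && (j < p)%N)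
     rho (Xm i j) * rho (Xm j i).
Definition Omega_oq (A : algType C) (rho : 'M[C]_n -> A) : A :=
  \sum_(i : idx | (p <= i)%N) \sum_(j : idx | (i < j)%N)
     rho (Xm i j) * rho (Xm j i).

Definition lie_hom (A : algType C) (rho : 'M[C]_n -> A) : Prop :=
  (forall (c : C) X Y, in_g X -> in_g Y -> rho (c *: X + Y) = c *: rho X + rho Y) /\
  (forall X Y, in_g X -> in_g Y ->
     rho (X *m Y - Y *m X) = rho X * rho Y - rho Y * rho X).

End Defs.

From HB Require Import structures.
From mathcomp Require Import all_boot all_order all_algebra all_field.
From mathcomp Require Import ring.
Import Order.TTheory GRing.Theory Num.Theory.
Set Implicit Arguments. Unset Strict Implicit. Unset Printing Implicit Defensive.
Local Open Scope ring_scope.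

(* Phi^-1 is conjugation by diag(r) with r_i = 1 on [p] and r_i = sqrt(-1) on
   p+[q], so r_i^2 = eps_i and Phi^-1(M_ik) = (r_i r_k)^-1 X_ik.  Hence
   rho(Phi^-1 M_ik) rho(Phi^-1 M_ki) = eps_i eps_k rho(X_ik) rho(X_ki)
   = rho(X_ik) rho(X_ik^vee) =: w_ik, the summand of Omega_g.  Therefore
   gamma_2(Q) = sum_(i,k) w_ik = 2 Omega_g and gamma_2(S_ii) = sum_k w_ik - 2 Omega_g / n.
   As w is symmetric, the terms of sum_i eps_i sum_k w_ik mixing the two blocks
   cancel, leaving the sums of w over [p]^2 and (p+[q])^2, which are 2 Omega_op
   and 2 Omega_oq since w_ik = rho(X_ik) rho(X_ki) inside a diagonal block. *)

Section DoubleSums.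
Variables (V : zmodType) (I : finType) (f : I -> I -> V).
Hypothesis f_sym : forall i k, f k i = f i k.

Lemma sum_blocks_signed (P : pred I) :
  \sum_(i | P i) \sum_k f i k - \sum_(i | ~~ P i) \sum_k f i k =
  \sum_(i | P i) \sum_(k | P k) f i k - \sum_(i | ~~ P i) \sum_(k | ~~ P k) f i k.
Proof.
have split_inner i : \sum_k f i k = \sum_(k | P k) f i k + \sum_(k | ~~ P k) f i k.
  exact: bigID.
have cross : \sum_(i | ~~ P i) \sum_(k | P k) f i k =
             \sum_(i | P i) \sum_(k | ~~ P k) f i k.
  by rewrite exchange_big; apply: eq_bigr => i _; apply: eq_bigr => k _.
under eq_bigr do rewrite split_inner.
under [\sum_(i | ~~ P i) _]eq_bigr do rewrite split_inner.
rewrite !big_split /= cross.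
by rewrite opprD addrACA addrA subrK.
Qed.

End DoubleSums.

Lemma sum_sym_pairs (V : zmodType) m (f : 'I_m -> 'I_m -> V) (P : pred 'I_m) :
    (forall i k, f k i = f i k) -> (forall i, f i i = 0) ->
  \sum_(i | P i) \sum_(k | P k) f i k =
    (\sum_(i | P i) \sum_(k | P k && (i < k)%N) f i k) *+ 2.
Proof.
move=> f_sym f_diag.
have split_lt i k :
    f i k = (if (i < k)%N then f i k else 0) + (if (k < i)%N then f i k else 0).
  by case: ltngtP => [_|_|/val_inj ->]; rewrite ?addr0 ?add0r ?f_diag.
have swap : \sum_(i | P i) \sum_(k | P k) (if (k < i)%N then f i k else 0) =
            \sum_(i | P i) \sum_(k | P k) (if (i < k)%N then f i k else 0).
  by rewrite exchange_big; apply: eq_bigr => i _; apply: eq_bigr => k _; rewrite f_sym.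
under eq_bigr do under eq_bigr do rewrite split_lt.
under eq_bigr do rewrite big_split /=.
rewrite big_split /= swap -mulr2n.
by congr (_ *+ 2); apply: eq_bigr => i _; rewrite big_mkcondr.
Qed.

Lemma sum_ord_lt_const (V : zmodType) p q (x : V) :
  \sum_(i < p + q | (i < p)%N) x = x *+ p.
Proof. by rewrite -(big_ord_widen _ (fun=> x) (leq_addr q p)) sumr_const card_ord. Qed.

Lemma sum_ord_ge_const (V : zmodType) p q (x : V) :
  \sum_(i < p + q | ~~ (i < p)%N) x = x *+ q.
Proof.
have sum_all : \sum_(i < p + q) x = x *+ (p + q) by rewrite sumr_const card_ord.
apply: (@addrI _ (x *+ p)); rewrite -mulrnDr -sum_all.
by rewrite [RHS](bigID (fun i : 'I_(p + q) => (i < p)%N)) /= sum_ord_lt_const.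
Qed.

Lemma invmx_diag (F : fieldType) n (d : 'rV[F]_n) :
  (forall i, d 0 i != 0) -> invmx (diag_mx d) = diag_mx (\row_i (d 0 i)^-1).
Proof.
move=> d_neq0; set e := \row_i _.
have de1 : diag_mx d *m diag_mx e = 1%:M.
  by rewrite mulmx_diag; apply/matrixP => i j; rewrite !mxE mulfV.
have [d_unit _] := mulmx1_unit de1.
by rewrite -[invmx _]mulmx1 -de1 mulKmx.
Qed.

Section DiagDelta.
Variables (R : pzRingType) (n : nat).
Implicit Types (d : 'rV[R]_n) (i k : 'I_n).

Lemma mul_diag_delta d i k : diag_mx d *m delta_mx i k = d 0 i *: delta_mx i k.
Proof.
rewrite mul_diag_mx; apply/matrixP => x y; rewrite !mxE.
by case: (x =P i) => [->|]; rewrite ?mulr0.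
Qed.

Lemma mul_delta_diag d i k : delta_mx i k *m diag_mx d = d 0 k *: delta_mx i k.
Proof.
rewrite mul_mx_diag; apply/matrixP => x y; rewrite !mxE.
by case: (y =P k) => [->|_]; case: (x =P i); rewrite /= ?mul1r ?mulr1 ?mul0r ?mulr0.
Qed.

End DiagDelta.

Section Signature.
Variables p q : nat.
Local Notation n := (p + q)%N.
Implicit Types i k : 'I_n.

Definition root_eps i : algC := if (i < p)%N then 1 else 'i.

Lemma root_eps_sqr i : root_eps i ^+ 2 = eps i.
Proof. by rewrite /root_eps /eps; case: ifP; rewrite ?expr1n ?sqrCi. Qed.

Lemma root_eps_neq0 i : root_eps i != 0.
Proof. by rewrite /root_eps; case: ifP; rewrite ?oner_eq0 ?neq0Ci. Qed.

Lemma eps_inv i : (eps i)^-1 = eps i.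
Proof. by rewrite /eps; case: ifP; rewrite ?invr1 ?invrN1. Qed.

Lemma XmN i k : Xm k i = - Xm i k.
Proof. by rewrite /Xm opprB. Qed.

Lemma Xvee_Xm i k : Xvee i k = (eps i * eps k) *: Xm k i.
Proof.
rewrite /Xvee (XmN i k) scalerN /eps.
by case: (i < p)%N; case: (k < p)%N; rewrite /= ?mulr1 ?mulrN1 ?opprK ?scale1r ?scaleN1r ?opprK.
Qed.

Lemma Phiinv_Mm i k : Phiinv (Mm i k) = (root_eps i * root_eps k)^-1 *: Xm i k.
Proof.
rewrite /Phiinv (_ : Ihalf p q = diag_mx (\row_j root_eps j)) //.
rewrite invmx_diag => [|j]; last by rewrite mxE root_eps_neq0.
rewrite /Mm mulmxBr mulmxBl !mul_diag_delta -!scalemxAl !mul_delta_diag !mxE.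
rewrite /Xm -!root_eps_sqr scalerBr !scalerA.
by congr (_ *: _ - _ *: _); field; rewrite !root_eps_neq0.
Qed.

Lemma in_g_Xm i k : in_g (Xm i k).
Proof.
apply/eqP; rewrite /Xm /Ipq raddfB /= ![(_ *: _)^T]linearZ /= !trmx_delta.
rewrite mulmxBl mulmxBr -!scalemxAl -!scalemxAr !mul_diag_delta !mul_delta_diag.
by rewrite !mxE !scalerA [eps k * _]mulrC addrA subrK subrr.
Qed.

Lemma root_epsM_sqrV i k : ((root_eps i * root_eps k) ^+ 2)^-1 = eps i * eps k.
Proof. by rewrite exprMn !root_eps_sqr invfM !eps_inv mulrC. Qed.

End Signature.

Section Gamma2.
Variables (p q : nat) (A : algType algC).
Implicit Types (f : 'M[algC]_(p + q) -> A) (s t : tens p q).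

Lemma gamma2_nil f : gamma2 f ([::] : tens p q) = 0.
Proof. by rewrite /gamma2 big_nil. Qed.

Lemma gamma2_cons f c a b t :
  gamma2 f ((c, a, b) :: t) = c *: (f a * f b) + gamma2 f t.
Proof. by rewrite /gamma2 big_cons. Qed.

Lemma gamma2_cat f s t : gamma2 f (s ++ t) = gamma2 f s + gamma2 f t.
Proof. by rewrite /gamma2 big_cat. Qed.

Lemma gamma2_tscale f c t : gamma2 f (tscale c t) = c *: gamma2 f t.
Proof. by rewrite /gamma2 big_map scaler_sumr; apply: eq_bigr => x _; rewrite scalerA. Qed.

Lemma gamma2_tsum f (g : 'I_(p + q) -> tens p q) :
  gamma2 f (tsum g) = \sum_i gamma2 f (g i).
Proof. by rewrite /gamma2 /tsum big_flatten /= big_map big_enum. Qed.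

Lemma gamma2_tPhiinv f t : gamma2 f (tPhiinv t) = gamma2 (f \o @Phiinv p q) t.
Proof. by rewrite /gamma2 big_map. Qed.

End Gamma2.

Section Casimir.
Variables (p q : nat) (A : algType algC) (rho : 'M[algC]_(p + q) -> A).
Hypothesis rho_linear : forall c X Y, in_g X -> in_g Y ->
  rho (c *: X + Y) = c *: rho X + rho Y.
Local Notation n := (p + q)%N.
Implicit Types i k : 'I_n.

Lemma in_g0 : in_g (0 : 'M[algC]_n).
Proof. by rewrite /in_g trmx0 mul0mx mulmx0 addr0. Qed.

Lemma rho0 : rho 0 = 0.
Proof. by have := rho_linear (-1) in_g0 in_g0; rewrite !scaleN1r !addNr. Qed.

Lemma rhoZ c X : in_g X -> rho (c *: X) = c *: rho X.
Proof. by move=> gX; have := rho_linear c gX in_g0; rewrite !addr0 rho0 addr0. Qed.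

Lemma rho_XmN i k : rho (Xm k i) = - rho (Xm i k).
Proof. by rewrite XmN -scaleN1r rhoZ ?in_g_Xm // scaleN1r. Qed.

Definition casimir_term i k := rho (Xm i k) * rho (Xvee i k).

Lemma casimir_termE i k :
  casimir_term i k = (eps i * eps k) *: (rho (Xm i k) * rho (Xm k i)).
Proof. by rewrite /casimir_term Xvee_Xm rhoZ ?in_g_Xm // scalerAr. Qed.

Lemma casimir_term_sym i k : casimir_term k i = casimir_term i k.
Proof. by rewrite !casimir_termE mulrC (rho_XmN i k) mulNr mulrN. Qed.

Lemma casimir_term_diag i : casimir_term i i = 0.
Proof. by rewrite /casimir_term /Xm subrr rho0 mul0r. Qed.

Lemma casimir_term_block i k : (i < p)%N = (k < p)%N ->
  casimir_term i k = rho (Xm i k) * rho (Xm k i).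
Proof. by move=> ik; rewrite /casimir_term /Xvee ik eqxx -XmN. Qed.

Lemma rho_Phiinv_Mm_pair i k :
  rho (Phiinv (Mm i k)) * rho (Phiinv (Mm k i)) = casimir_term i k.
Proof.
rewrite !Phiinv_Mm !rhoZ ?in_g_Xm // -scalerAl -scalerAr scalerA.
by rewrite [root_eps k * _]mulrC -invfM -expr2 root_epsM_sqrV casimir_termE.
Qed.

Lemma Omega_g_pairs : Omega_g rho *+ 2 = \sum_i \sum_k casimir_term i k.
Proof. by rewrite (sum_sym_pairs xpredT casimir_term_sym casimir_term_diag). Qed.

Lemma Omega_op_pairs : Omega_op rho *+ 2 =
  \sum_(i : 'I_n | (i < p)%N) \sum_(k : 'I_n | (k < p)%N) casimir_term i k.
Proof.
rewrite (sum_sym_pairs (fun i : 'I_n => (i < p)%N) casimir_term_sym casimir_term_diag).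
congr (_ *+ 2); apply: eq_bigr => i ip.
rewrite [RHS](eq_bigl _ _ (fun k => andbC _ _)).
by apply: eq_bigr => k /andP[_ kp]; rewrite casimir_term_block // ip kp.
Qed.

Lemma Omega_oq_pairs : Omega_oq rho *+ 2 =
  \sum_(i : 'I_n | ~~ (i < p)%N) \sum_(k : 'I_n | ~~ (k < p)%N) casimir_term i k.
Proof.
rewrite (sum_sym_pairs (fun i : 'I_n => ~~ (i < p)%N) casimir_term_sym casimir_term_diag).
rewrite /Omega_oq (eq_bigl (fun i : 'I_n => ~~ (i < p)%N)) => [|i]; last exact: leqNgt.
congr (_ *+ 2); apply: eq_bigr => i ip.
have lt_ge k : (i < k)%N -> ~~ (k < p)%N.
  by rewrite -leqNgt => /ltnW; apply: leq_trans; rewrite leqNgt.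
rewrite [RHS](eq_bigl (fun k : 'I_n => (i < k)%N)) => [|k]; last first.
  by case ik: (i < k)%N; rewrite ?andbF // andbT lt_ge.
by apply: eq_bigr => k /lt_ge kp; rewrite casimir_term_block // (negbTE ip) (negbTE kp).
Qed.

Local Notation rhoPhi := (rho \o @Phiinv p q).

Lemma gamma2_Qnat : gamma2 rhoPhi (Qnat p q) = \sum_i \sum_k casimir_term i k.
Proof.
rewrite gamma2_tsum; apply: eq_bigr => i _; rewrite gamma2_tsum; apply: eq_bigr => k _.
by rewrite gamma2_cons gamma2_nil scale1r addr0 rho_Phiinv_Mm_pair.
Qed.

Lemma gamma2_Snat i : gamma2 rhoPhi (Snat i i) =
  \sum_k casimir_term i k - n%:R^-1 *: \sum_j \sum_k casimir_term j k.
Proof.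
rewrite gamma2_cat !gamma2_tscale gamma2_Qnat gamma2_tsum eqxx /= mulr1n !div1r scaleNr.
congr (_ - _).
rewrite (eq_bigr (fun k => casimir_term i k *+ 2)) => [|k _]; last first.
  by rewrite !gamma2_cons gamma2_nil !scale1r addr0 !rho_Phiinv_Mm_pair casimir_term_sym.
by rewrite sumrMnl -scaler_nat scalerA mulVf ?scale1r // pnatr_eq0.
Qed.

Lemma gamma2_Xi : gamma2 rho (Xi p q) = (1 / 2 : algC) *:
  (\sum_(i : 'I_n | (i < p)%N) gamma2 rhoPhi (Snat i i)
   - \sum_(i : 'I_n | ~~ (i < p)%N) gamma2 rhoPhi (Snat i i)).
Proof.
rewrite /Xi gamma2_tPhiinv /Xinat gamma2_tscale gamma2_cat gamma2_tscale.
rewrite !gamma2_tsum scaleN1r.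
congr (_ *: (_ - _)); rewrite [RHS]big_mkcond; apply: eq_bigr => i _.
  by rewrite (fun_if (gamma2 rhoPhi)) gamma2_nil.
by rewrite if_neg (fun_if (gamma2 rhoPhi)) gamma2_nil.
Qed.

End Casimir.

Theorem lemma3p3 (p q : nat) (A : algType algC) (rho : 'M[algC]_(p + q) -> A) :
  lie_hom rho ->
  gamma2 rho (Xi p q) =
    Omega_op rho - Omega_oq rho
    - ((p%:R - q%:R) / (p + q)%:R : algC) *: Omega_g rho.
Proof.
move=> [rho_linear _].
rewrite gamma2_Xi; under eq_bigr do rewrite gamma2_Snat //.
under [X in _ - X]eq_bigr do rewrite gamma2_Snat //.
rewrite !sumrB sum_ord_lt_const sum_ord_ge_const.
have regroup (a b c d : A) : a - c - (b - d) = a - b - (c - d).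
  by rewrite !opprB addrACA [RHS]addrACA [- b + _]addrC.
rewrite regroup (sum_blocks_signed (casimir_term_sym rho_linear)).
rewrite -Omega_op_pairs // -Omega_oq_pairs // -Omega_g_pairs // -mulrnBl.
set u := (p + q)%:R^-1 *: _.
rewrite -[u *+ p]scaler_nat -[u *+ q]scaler_nat -scalerBl /u scalerA.
rewrite -scalerMnr -mulrnBl -scaler_nat scalerA.
by rewrite mul1r mulVf ?pnatr_eq0 // scale1r.
Qed.
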